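(* Let $c>0$, $q>0$, let $f,g:\mathbb{R}\to\mathbb{R}$ be continuous, $a\in\mathbb{R}$, and let $\varphi$ be a solution on $[0,R)$ of $$\varphi''+\frac{c-1}{r}\varphi'=f(\varphi)+g(\varphi)|\varphi'|^q,\qquad\varphi(0)=a,\qquad\varphi'(0)=0 .$$ Then: \begin{itemize} \item[(i)] if $f$ is positive, then $\varphi$ is strictly increasing; \item[(ii)] if $f$ is positive, $f,g$ are nondecreasing, and $c\ge1$, then $\varphi$ is convex and $\varphi'(r)\le\left(\frac{f(\varphi(r))}{g^-(\varphi(r))}\right)^{1/q}$ for all $r\in[0,R)$ (the right-hand side being $+\infty$ where $g^-(\varphi(r))=0$); \item[(iii)] if $f$ is positive, $f,g$ are nondecreasing, $g$ is nonnegative and $c\ge1$, then $\varphi''(r)\ge\frac{\varphi'(r)}{r}$ for all $r\in(0,R)$. \end{itemize}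
   Context: A solution on $[0,R)$, $0<R\le+\infty$, is a function $\varphi\in C^2((0,R))\cap C([0,R))$ satisfying the ODE on $(0,R)$, $\varphi(0)=a$, $\lim_{r\to0^+}\varphi'(r)=0=\varphi'(0)$, and such that $\lim_{r\to0^+}\varphi''(r)$ exists in $\mathbb{R}$. $g^-=\max(-g,0)$. *)

From Stdlib Require Import Reals Lra.
From Coquelicot Require Import Coquelicot.
Open Scope R_scope.

(* |x|^q for real q > 0, with the convention 0^q = 0 (Rpower needs a positive base). *)
Definition abspow (x q : R) : R :=
  if Req_EM_T x 0 then 0 else Rpower (Rabs x) q.

Definition negpart (y : R) : R := Rmax (- y) 0.

Definition is_right_deriv (phi : R -> R) (r d : R) : Prop :=
  filterlim (fun h => (phi (r + h) - phi r) / h) (at_right 0) (locally d).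

Definition is_solution (c q : R) (f g : R -> R) (a : R) (Rm : Rbar) (phi : R -> R) : Prop :=
  Rbar_lt 0 Rm /\
  (forall r, 0 < r -> Rbar_lt r Rm ->
     ex_derive phi r /\ ex_derive (Derive phi) r /\ continuous (Derive_n phi 2) r) /\
  (* phi in C([0,Rm)) : continuity at 0 from the right (interior continuity follows from C^2) *)
  filterlim phi (at_right 0) (locally (phi 0)) /\
  (forall r, 0 < r -> Rbar_lt r Rm ->
     Derive_n phi 2 r + (c - 1) / r * Derive phi r
     = f (phi r) + g (phi r) * abspow (Derive phi r) q) /\
  phi 0 = a /\
  is_right_deriv phi 0 0 /\
  filterlim (Derive phi) (at_right 0) (locally 0) /\
  (exists L : R, filterlim (Derive_n phi 2) (at_right 0) (locally L)).

From Stdlib Require Import Reals Lra.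
From Coquelicot Require Import Coquelicot.
Open Scope R_scope.

(* Near the origin [phi'(r)/r] and [phi''(r)] have the same limit [L] (a mean value
   argument), so letting [r -> 0+] in the equation gives [c L = f(a)]. When [f > 0], both
   [phi'] and [phi''] are therefore positive near [0], and [phi'] never returns to [0]
   because at a zero of [phi'] the equation reads [phi'' = f(phi) > 0].
   For (ii), let [r1] be the last zero of [phi''] before a point where [phi'' < 0]. By
   monotonicity of [f] and [g], [phi''] is bounded below after [r1] by
   [f(phi(r1)) + g(phi(r1)) |phi'|^q - (c-1) phi'/r], which equals [0] at [r1]. If [c > 1]
   this bound has derivative [(c-1) phi'(r1)/r1^2 > 0] at [r1]; if [c = 1] the equation
   forces [g(phi(r1)) < 0] and the bound grows as [phi'] decreases. Either way [phi'']
   cannot turn negative, and convexity and the slope bound follow from [phi'' >= 0].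
   For (iii), [v = phi'/r] satisfies [v' = (phi'' - v)/r], and the right-hand side of
   the equation is nondecreasing in [r]. *)

Lemma at_right_0_interval (P : R -> Prop) :
  at_right 0 P <-> exists d, 0 < d /\ forall x, 0 < x < d -> P x.
Proof.
  split.
  - intros [d Hd]. exists d. split; [apply cond_pos|]. intros x Hx.
    apply Hd; [change (Rabs (x - 0) < d); rewrite Rminus_0_r, Rabs_pos_eq|]; lra.
  - intros [d [Hd HP]]. exists (mkposreal d Hd). intros x Hx Hx0.
    change (Rabs (x - 0) < d) in Hx. rewrite Rminus_0_r, Rabs_pos_eq in Hx by lra.
    apply HP; lra.
Qed.

Lemma at_right_0_point (P : R -> Prop) (r : R) :
  0 < r -> at_right 0 P -> exists x, 0 < x < r /\ P x.
Proof.
  intros Hr [d [Hd HP]]%at_right_0_interval.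
  exists (Rmin d r / 2). assert (0 < Rmin d r <= d /\ Rmin d r <= r)
    by (split; [split; [apply Rmin_case|apply Rmin_l]|apply Rmin_r]; lra).
  split; [|apply HP]; lra.
Qed.

Lemma filterlim_pos {T} {F : (T -> Prop) -> Prop} (h : T -> R) (L : R) :
  filterlim h F (locally L) -> 0 < L -> F (fun x => 0 < h x).
Proof. intros H HL. apply (H (fun z => 0 < z)), (open_gt 0 L HL). Qed.

Lemma is_derive_pos_quotient (h : R -> R) (x l : R) :
  is_derive h x l -> 0 < l ->
  exists d, 0 < d /\ forall k, k <> 0 -> Rabs k < d -> 0 < (h (x + k) - h x) / k.
Proof.
  intros Hd Hl. apply is_derive_Reals in Hd. destruct (Hd l Hl) as [d Hq].
  exists d. split; [apply cond_pos|]. intros k Hk0 Hk.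
  specialize (Hq k Hk0 Hk). apply Rabs_def2 in Hq. lra.
Qed.

Lemma derive_pos_right (h : R -> R) (x l b : R) :
  is_derive h x l -> 0 < l -> x < b -> exists y, x < y < b /\ h x < h y.
Proof.
  intros Hd Hl Hb. destruct (is_derive_pos_quotient h x l Hd Hl) as [d [Hd0 Hq]].
  set (k := Rmin d (b - x) / 2).
  assert (Hk : 0 < k < d /\ k < b - x).
  { unfold k. pose proof (Rmin_l d (b - x)). pose proof (Rmin_r d (b - x)).
    assert (0 < Rmin d (b - x)) by (apply Rmin_case; lra). lra. }
  specialize (Hq k ltac:(lra) ltac:(rewrite Rabs_pos_eq; lra)).
  exists (x + k). split; [lra|]. apply Rlt_0_minus.
  replace (h (x + k) - h x) with ((h (x + k) - h x) / k * k) by (field; lra).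
  apply Rmult_lt_0_compat; lra.
Qed.

Lemma derive_pos_left (h : R -> R) (x l a : R) :
  is_derive h x l -> 0 < l -> a < x -> exists y, a < y < x /\ h y < h x.
Proof.
  intros Hd Hl Ha. destruct (is_derive_pos_quotient h x l Hd Hl) as [d [Hd0 Hq]].
  set (k := Rmin d (x - a) / 2).
  assert (Hk : 0 < k < d /\ k < x - a).
  { unfold k. pose proof (Rmin_l d (x - a)). pose proof (Rmin_r d (x - a)).
    assert (0 < Rmin d (x - a)) by (apply Rmin_case; lra). lra. }
  specialize (Hq (- k) ltac:(lra) ltac:(rewrite Rabs_Ropp, Rabs_pos_eq; lra)).
  exists (x + - k). split; [lra|]. apply Rlt_0_minus.
  replace (h x - h (x + - k)) with ((h (x + - k) - h x) / - k * k) by (field; lra).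
  apply Rmult_lt_0_compat; lra.
Qed.

Lemma continuous_at_right (h : R -> R) (x : R) :
  continuous h x -> filterlim h (at_right x) (locally (h x)).
Proof.
  intros Hc. unfold filterlim, filter_le, filtermap, at_right, within. intros P HP.
  apply (filter_imp (fun y => P (h y))); [intros y Hy _; exact Hy|].
  exact (Hc P HP).
Qed.

Lemma continuous_of_is_derive (h : R -> R) (x l : R) : is_derive h x l -> continuous h x.
Proof. intros Hd. apply (ex_derive_continuous (K := R_AbsRing) (V := R_NormedModule)). exists l. exact Hd. Qed.

Lemma mvt_right_limit (h dh : R -> R) (a b l : R) :
  a < b -> (forall x, a < x <= b -> is_derive h x (dh x)) ->
  filterlim h (at_right a) (locally l) ->
  exists xi, a < xi < b /\ h b - l = dh xi * (b - a).
Proof.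
  intros Hab Hd Hl.
  set (h0 := fun x => if Rlt_dec a x then h x else l).
  assert (Hext : forall x, a < x -> locally x (fun t => h t = h0 t)).
  { intros x Hx. exists (mkposreal (x - a) ltac:(lra)). intros t Ht.
    change (Rabs (t - x) < x - a) in Ht. apply Rabs_def2 in Ht.
    unfold h0. destruct (Rlt_dec a t); [reflexivity|lra]. }
  set (m := (a + b) / 2).
  set (df := fun x => if Rlt_dec a x then if Rlt_dec x b then dh x else dh m else dh m).
  destruct (MVT_gen h0 a b df) as [xi [_ E]].
  - rewrite Rmin_left, Rmax_right by lra. intros x Hx.
    unfold df. destruct (Rlt_dec a x); [destruct (Rlt_dec x b)|]; try lra.
    apply (is_derive_ext_loc h); [apply Hext|apply Hd]; lra.
  - rewrite Rmin_left, Rmax_right by lra. intros x Hx. apply continuity_pt_filterlim.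
    destruct (Rle_lt_or_eq_dec a x) as [Hax|<-]; [lra| |].
    + apply (continuous_ext_loc h0 h); [apply Hext; lra|].
      apply (continuous_of_is_derive h x (dh x)), Hd. lra.
    + apply filterlim_locally. intros eps.
      apply (filter_imp (fun y => a < y -> ball l eps (h y))); [|exact (proj1 (filterlim_locally _ _) Hl eps)].
      intros y Hy. unfold h0. destruct (Rlt_dec a a); [lra|].
      destruct (Rlt_dec a y); [auto|apply ball_center].
  - unfold h0 in E. destruct (Rlt_dec a b); [|lra]. destruct (Rlt_dec a a); [lra|].
    unfold df in E. unfold m in E.
    destruct (Rlt_dec a xi); [destruct (Rlt_dec xi b)|].
    + exists xi. auto.
    + exists ((a + b) / 2). split; [lra|auto].
    + exists ((a + b) / 2). split; [lra|auto].
Qed.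

Lemma mvt_derive (h dh : R -> R) (a b : R) :
  a < b -> (forall x, a <= x <= b -> is_derive h x (dh x)) ->
  exists xi, a < xi < b /\ h b - h a = dh xi * (b - a).
Proof.
  intros Hab Hd. apply mvt_right_limit; [exact Hab|intros x Hx; apply Hd; lra|].
  apply continuous_at_right, (continuous_of_is_derive h a (dh a)), Hd. lra.
Qed.

Lemma continuous_locally_lt (h : R -> R) (x m : R) :
  continuous h x -> h x < m -> exists d, 0 < d /\ forall y, Rabs (y - x) < d -> h y < m.
Proof.
  intros Hc Hx. destruct (Hc _ (open_lt m (h x) Hx)) as [d Hd].
  exists d. split; [apply cond_pos|]. exact Hd.
Qed.

Lemma continuous_locally_gt (h : R -> R) (x m : R) :
  continuous h x -> m < h x -> exists d, 0 < d /\ forall y, Rabs (y - x) < d -> m < h y.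
Proof.
  intros Hc Hx. destruct (Hc _ (open_gt m (h x) Hx)) as [d Hd].
  exists d. split; [apply cond_pos|]. exact Hd.
Qed.

Lemma last_crossing (h : R -> R) (a b m : R) :
  a < b -> (forall x, a <= x <= b -> continuous h x) -> m <= h a -> h b < m ->
  exists r, a <= r < b /\ h r = m /\ forall x, r < x <= b -> h x < m.
Proof.
  intros Hab Hc Ha Hb.
  set (E := fun x => a <= x <= b /\ m <= h x).
  destruct (completeness E) as [s [Hub Hlub]].
  { exists b. intros x [Hx _]. lra. }
  { exists a. split; [lra|exact Ha]. }
  assert (Has : a <= s) by (apply Hub; split; [lra|exact Ha]).
  assert (Hsb : s <= b) by (apply Hlub; intros x [Hx _]; lra).
  assert (Hafter : forall x, s < x <= b -> h x < m).
  { intros x Hx. apply Rnot_le_lt. intros Hm.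
    assert (x <= s) by (apply Hub; split; [lra|exact Hm]). lra. }
  assert (Hms : m <= h s).
  { apply Rnot_lt_le. intros Hs.
    destruct (continuous_locally_lt h s m (Hc s ltac:(lra)) Hs) as [d [Hd Hnear]].
    assert (s <= Rmax a (s - d / 2)).
    { apply Hlub. intros x [Hx Hmx]. destruct (Rle_lt_dec x (s - d / 2)).
      - apply Rle_trans with (s - d / 2); [assumption|apply Rmax_r].
      - assert (x <= s) by (apply Hub; split; assumption).
        assert (h x < m) by (apply Hnear; rewrite Rabs_left1; lra). lra. }
    revert H. apply Rmax_case; intros; [assert (s = a) by lra; subst s|]; lra. }
  assert (Hsb' : s < b) by (destruct (Req_dec s b); [subst s; lra|lra]).
  exists s. split; [lra|]. split; [|exact Hafter].
  apply Rle_antisym; [|exact Hms]. apply Rnot_lt_le. intros Hs.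
  destruct (continuous_locally_gt h s m (Hc s ltac:(lra)) Hs) as [d [Hd Hnear]].
  set (x := Rmin (s + d / 2) b).
  assert (s < x <= s + d / 2 /\ x <= b)
    by (unfold x; split; [split; [apply Rmin_case|apply Rmin_l]|apply Rmin_r]; lra).
  assert (m < h x) by (apply Hnear; rewrite Rabs_pos_eq; lra).
  assert (h x < m) by (apply Hafter; lra). lra.
Qed.

Lemma ratio_limit (h dh : R -> R) (L : R) :
  at_right 0 (fun x => is_derive h x (dh x)) ->
  filterlim dh (at_right 0) (locally L) ->
  filterlim h (at_right 0) (locally 0) ->
  filterlim (fun x => h x / x) (at_right 0) (locally L).
Proof.
  intros Hd HL H0. apply filterlim_locally. intros eps.
  destruct (proj1 (at_right_0_interval _)
              (filter_and _ _ Hd (proj1 (filterlim_locally _ _) HL eps))) as [d [Hd0 Hnear]].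
  apply at_right_0_interval. exists d. split; [exact Hd0|]. intros r Hr.
  destruct (mvt_right_limit h dh 0 r 0) as [xi [Hxi E]];
    [lra|intros x Hx; apply Hnear; lra|exact H0|].
  replace (h r / r) with (dh xi) by (apply (Rmult_eq_reg_r r); [field_simplify; lra|lra]).
  apply Hnear. lra.
Qed.

Lemma Rpower_pos (x y : R) : 0 < Rpower x y.
Proof. apply exp_pos. Qed.

Lemma abspow_0 (q : R) : abspow 0 q = 0.
Proof. unfold abspow. destruct (Req_EM_T 0 0); [reflexivity|congruence]. Qed.

Lemma abspow_pos (x q : R) : 0 < x -> abspow x q = Rpower x q.
Proof. intros Hx. unfold abspow. destruct (Req_EM_T x 0); [lra|]. rewrite Rabs_pos_eq; lra. Qed.

Lemma abspow_ge0 (x q : R) : 0 <= abspow x q.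
Proof. unfold abspow. destruct (Req_EM_T x 0); [lra|]. left. apply Rpower_pos. Qed.

Lemma abspow_le (x y q : R) : 0 <= q -> 0 < x <= y -> abspow x q <= abspow y q.
Proof.
  intros Hq Hxy. rewrite !abspow_pos by lra. apply Rle_Rpower_l; assumption.
Qed.

Lemma abspow_lim0 (q : R) : 0 < q -> filterlim (fun x => abspow x q) (locally 0) (locally 0).
Proof.
  intros Hq. apply filterlim_locally. intros eps.
  exists (mkposreal _ (Rpower_pos eps (1 / q))). intros x Hx.
  change (Rabs (x - 0) < Rpower eps (1 / q)) in Hx. rewrite Rminus_0_r in Hx.
  change (Rabs (abspow x q - 0) < eps). rewrite Rminus_0_r, Rabs_pos_eq by apply abspow_ge0.
  unfold abspow. destruct (Req_EM_T x 0); [apply cond_pos|].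
  rewrite <- (Rpower_1 eps) by apply cond_pos.
  replace 1 with (1 / q * q) by (field; lra). rewrite <- Rpower_mult.
  apply Rlt_Rpower_l; [exact Hq|]. split; [apply Rabs_pos_lt|]; assumption.
Qed.

Lemma is_derive_ratio (h : R -> R) (x d : R) :
  is_derive h x d -> x <> 0 -> is_derive (fun t => h t / t) x ((d - h x / x) / x).
Proof.
  intros Hd Hx. replace ((d - h x / x) / x) with ((d * x - h x * 1) / x ^ 2) by (field; exact Hx).
  apply (is_derive_div h (fun t => t)); [exact Hd|apply (is_derive_id (K := R_AbsRing))|exact Hx].
Qed.

Lemma is_derive_abspow (h : R -> R) (x d q : R) :
  is_derive h x d -> 0 < h x ->
  is_derive (fun t => abspow (h t) q) x (q * Rpower (h x) (q - 1) * d).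
Proof.
  intros Hd Hx.
  destruct (continuous_locally_gt h x 0 (continuous_of_is_derive h x d Hd) Hx) as [e [He Hpos]].
  apply (is_derive_ext_loc (fun t => Rpower (h t) q)).
  { exists (mkposreal e He). intros t Ht. symmetry. apply abspow_pos, Hpos, Ht. }
  apply is_derive_Reals.
  apply (derivable_pt_lim_comp h (fun y => Rpower y q)); [apply is_derive_Reals, Hd|].
  apply derivable_pt_lim_power, Hx.
Qed.

Lemma is_derive_right_deriv (h : R -> R) (x l : R) : is_derive h x l -> is_right_deriv h x l.
Proof.
  intros Hd. apply is_derive_Reals in Hd. apply filterlim_locally. intros eps.
  destruct (Hd eps (cond_pos eps)) as [d Hq].
  apply at_right_0_interval. exists d. split; [apply cond_pos|]. intros k Hk.
  apply Hq; [lra|rewrite Rabs_pos_eq; lra].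
Qed.

Lemma is_right_deriv_unique (h : R -> R) (x d d' : R) :
  is_right_deriv h x d -> is_right_deriv h x d' -> d = d'.
Proof. apply (filterlim_locally_unique (K := R_AbsRing) (V := R_NormedModule)). Qed.

Lemma Rbar_lt_of_le (r s : R) (M : Rbar) : r <= s -> Rbar_lt s M -> Rbar_lt r M.
Proof. intros Hrs Hs. apply Rbar_le_lt_trans with s; [exact Hrs|exact Hs]. Qed.

Lemma negpart_pos_eq (y : R) : 0 < negpart y -> negpart y = - y.
Proof. unfold negpart, Rmax. destruct (Rle_dec (- y) 0); lra. Qed.

Section Solution.

Variables (c q : R) (f g : R -> R) (a : R) (Rm : Rbar) (phi : R -> R).
Hypothesis c_pos : 0 < c.
Hypothesis q_pos : 0 < q.
Hypothesis f_cont : forall x, continuous f x.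
Hypothesis g_cont : forall x, continuous g x.
Hypothesis sol : is_solution c q f g a Rm phi.

Local Notation dphi := (Derive phi).
Local Notation ddphi := (Derive_n phi 2).

Let rhs (r : R) : R := f (phi r) + g (phi r) * abspow (dphi r) q.

Lemma sol_ode (r : R) : 0 < r -> Rbar_lt r Rm -> ddphi r + (c - 1) / r * dphi r = rhs r.
Proof. destruct sol as (_ & _ & _ & Hode & _). apply Hode. Qed.

Lemma sol_derive (r : R) : 0 < r -> Rbar_lt r Rm -> is_derive phi r (dphi r).
Proof.
  destruct sol as (_ & HC2 & _). intros Hr HrR. apply Derive_correct, (HC2 r Hr HrR).
Qed.

Lemma sol_derive2 (r : R) : 0 < r -> Rbar_lt r Rm -> is_derive dphi r (ddphi r).
Proof.
  destruct sol as (_ & HC2 & _). intros Hr HrR. apply Derive_correct, (HC2 r Hr HrR).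
Qed.

Lemma sol_continuous2 (r : R) : 0 < r -> Rbar_lt r Rm -> continuous ddphi r.
Proof. destruct sol as (_ & HC2 & _). intros Hr HrR. apply (HC2 r Hr HrR). Qed.

Lemma sol_right_limit (r : R) : 0 <= r -> Rbar_lt r Rm ->
  filterlim phi (at_right r) (locally (phi r)).
Proof.
  destruct sol as (_ & _ & Hphi0 & _). intros Hr HrR.
  destruct (Rle_lt_or_eq_dec 0 r Hr) as [Hpos|<-]; [|exact Hphi0].
  apply continuous_at_right, (continuous_of_is_derive _ _ _ (sol_derive r Hpos HrR)).
Qed.

Lemma at_right_0_domain : at_right 0 (fun r => 0 < r /\ Rbar_lt r Rm).
Proof.
  destruct sol as (HR0 & _). apply at_right_0_interval.
  destruct Rm as [M| |]; simpl in *; [exists M|exists 1|contradiction]; split; intros; lra.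
Qed.

Lemma phi_mvt (r s : R) : 0 <= r < s -> Rbar_lt s Rm ->
  exists xi, r < xi < s /\ phi s - phi r = dphi xi * (s - r).
Proof.
  intros Hrs Hs. apply mvt_right_limit; [lra| |].
  - intros x Hx. apply sol_derive; [lra|]. apply (Rbar_lt_of_le x s); [lra|exact Hs].
  - apply sol_right_limit; [lra|]. apply (Rbar_lt_of_le r s); [lra|exact Hs].
Qed.

Lemma dphi_mvt (u w : R) : 0 < u < w -> Rbar_lt w Rm ->
  exists xi, u < xi < w /\ dphi w - dphi u = ddphi xi * (w - u).
Proof.
  intros Huw Hw. apply mvt_derive; [lra|]. intros x Hx.
  apply sol_derive2; [lra|]. apply (Rbar_lt_of_le x w); [lra|exact Hw].
Qed.

Lemma second_deriv_lim0 : exists L,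
  filterlim ddphi (at_right 0) (locally L) /\
  filterlim (fun r => dphi r / r) (at_right 0) (locally L) /\ c * L = f (phi 0).
Proof.
  destruct sol as (_ & _ & Hphi0 & _ & _ & _ & Hdphi0 & [L HL]).
  assert (Hratio : filterlim (fun r => dphi r / r) (at_right 0) (locally L)).
  { apply (ratio_limit dphi ddphi L); [|exact HL|exact Hdphi0].
    apply (filter_imp _ _ (fun r Hr => sol_derive2 r (proj1 Hr) (proj2 Hr)) at_right_0_domain). }
  exists L. split; [exact HL|]. split; [exact Hratio|].
  assert (Hlhs : filterlim (fun r => ddphi r + (c - 1) * (dphi r / r)) (at_right 0)
                   (locally (L + (c - 1) * L))).
  { eapply filterlim_comp_2; [exact HL| |apply (filterlim_plus (K := R_AbsRing) (V := R_NormedModule))].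
    eapply filterlim_comp_2; [apply filterlim_const|exact Hratio|apply (filterlim_mult (K := R_AbsRing))]. }
  assert (Hrhs : filterlim rhs (at_right 0) (locally (f (phi 0) + g (phi 0) * 0))).
  { eapply filterlim_comp_2; [exact (filterlim_comp _ _ _ phi f _ _ _ Hphi0 (f_cont _))| |apply (filterlim_plus (K := R_AbsRing) (V := R_NormedModule))].
    eapply filterlim_comp_2; [exact (filterlim_comp _ _ _ phi g _ _ _ Hphi0 (g_cont _))| |apply (filterlim_mult (K := R_AbsRing))].
    exact (filterlim_comp _ _ _ dphi (fun x => abspow x q) _ _ _ Hdphi0 (abspow_lim0 q q_pos)). }
  assert (Hode : at_right 0 (fun r => ddphi r + (c - 1) * (dphi r / r) = rhs r)).
  { apply (filter_imp (fun r => 0 < r /\ Rbar_lt r Rm)); [|exact at_right_0_domain].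
    intros r [Hr HrR]. rewrite <- (sol_ode r Hr HrR). field. lra. }
  pose proof (filterlim_locally_unique (K := R_AbsRing) (V := R_NormedModule) _ _ _
                (filterlim_ext_loc _ _ Hode Hlhs) Hrhs). lra.
Qed.

Lemma second_deriv_at_critical (r : R) : 0 < r -> Rbar_lt r Rm -> dphi r = 0 ->
  ddphi r = f (phi r).
Proof.
  intros Hr HrR H0. pose proof (sol_ode r Hr HrR) as E.
  unfold rhs in E. rewrite H0, abspow_0, !Rmult_0_r, !Rplus_0_r in E. exact E.
Qed.

Section PositiveSource.

Hypothesis f_pos : forall x, 0 < f x.

Lemma derivs_pos_near0 : at_right 0 (fun r => 0 < dphi r /\ 0 < ddphi r).
Proof.
  destruct second_deriv_lim0 as [L [HL [Hratio HcL]]].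
  assert (HLpos : 0 < L) by (pose proof (f_pos (phi 0)); nra).
  apply (filter_imp (fun r => (0 < r /\ Rbar_lt r Rm) /\ 0 < dphi r / r /\ 0 < ddphi r)).
  - intros r [[Hr _] [Hd1 Hd2]]. split; [|exact Hd2].
    replace (dphi r) with (dphi r / r * r) by (field; lra). apply Rmult_lt_0_compat; lra.
  - apply filter_and; [exact at_right_0_domain|].
    apply filter_and; apply filterlim_pos with L; assumption.
Qed.

Lemma deriv_nonneg (r : R) : 0 < r -> Rbar_lt r Rm -> 0 <= dphi r.
Proof.
  intros Hr HrR. apply Rnot_lt_le. intros Hneg.
  destruct (at_right_0_point _ r Hr derivs_pos_near0) as [a0 [Ha0 [Hda0 _]]].
  assert (Hdom : forall x, a0 <= x <= r -> 0 < x /\ Rbar_lt x Rm)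
    by (intros x Hx; split; [lra|apply (Rbar_lt_of_le x r); [lra|exact HrR]]).
  destruct (last_crossing dphi a0 r 0) as [r1 [Hr1 [Hz Hafter]]]; [lra| |lra|exact Hneg|].
  { intros x Hx. destruct (Hdom x Hx) as [Hx0 HxR].
    exact (continuous_of_is_derive _ _ _ (sol_derive2 x Hx0 HxR)). }
  destruct (Hdom r1 ltac:(lra)) as [Hr10 Hr1R].
  assert (Hcurv : 0 < ddphi r1) by (rewrite second_deriv_at_critical by assumption; apply f_pos).
  destruct (derive_pos_right dphi r1 _ r (sol_derive2 r1 Hr10 Hr1R) Hcurv) as [y [Hy Hlt]]; [lra|].
  specialize (Hafter y ltac:(lra)). lra.
Qed.

Lemma deriv_pos (r : R) : 0 < r -> Rbar_lt r Rm -> 0 < dphi r.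
Proof.
  intros Hr HrR. destruct (deriv_nonneg r Hr HrR) as [Hpos|Hzero]; [exact Hpos|exfalso].
  assert (Hcurv : 0 < ddphi r) by (rewrite second_deriv_at_critical by auto; apply f_pos).
  destruct (derive_pos_left dphi r _ 0 (sol_derive2 r Hr HrR) Hcurv Hr) as [y [Hy Hlt]].
  assert (HyR : Rbar_lt y Rm) by (apply (Rbar_lt_of_le y r); [lra|exact HrR]).
  pose proof (deriv_nonneg y (proj1 Hy) HyR). lra.
Qed.

Lemma phi_increasing (r s : R) : 0 <= r -> r < s -> Rbar_lt s Rm -> phi r < phi s.
Proof.
  intros Hr Hrs HsR. destruct (phi_mvt r s) as [xi [Hxi E]]; [lra|exact HsR|].
  assert (HxiR : Rbar_lt xi Rm) by (apply (Rbar_lt_of_le xi s); [lra|exact HsR]).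
  pose proof (deriv_pos xi ltac:(lra) HxiR).
  assert (0 < dphi xi * (s - r)) by (apply Rmult_lt_0_compat; lra). lra.
Qed.


Section MonotoneSource.

Hypothesis f_mono : forall x y, x <= y -> f x <= f y.
Hypothesis g_mono : forall x y, x <= y -> g x <= g y.
Hypothesis c_ge1 : 1 <= c.

Lemma ode_lower_bound (r1 x : R) : 0 < r1 <= x -> Rbar_lt x Rm ->
  f (phi r1) + g (phi r1) * abspow (dphi x) q - (c - 1) / x * dphi x <= ddphi x.
Proof.
  intros Hx HxR. pose proof (sol_ode x ltac:(lra) HxR) as E. unfold rhs in E.
  assert (Hphi : phi r1 <= phi x).
  { destruct (Rle_lt_or_eq_dec r1 x (proj2 Hx)) as [Hlt|<-]; [|lra].
    left. apply phi_increasing; [lra|exact Hlt|exact HxR]. }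
  pose proof (f_mono _ _ Hphi).
  pose proof (Rmult_le_compat_r _ _ _ (abspow_ge0 (dphi x) q) (g_mono _ _ Hphi)).
  lra.
Qed.

Lemma not_concave_after_inflection_c_gt1 (r1 r0 : R) :
  1 < c -> 0 < r1 < r0 -> Rbar_lt r0 Rm -> ddphi r1 = 0 ->
  (forall x, r1 < x <= r0 -> ddphi x < 0) -> False.
Proof.
  intros Hc1 Hr Hr0R Hz Hneg.
  assert (Hr1R : Rbar_lt r1 Rm) by (apply (Rbar_lt_of_le r1 r0); [lra|exact Hr0R]).
  pose proof (deriv_pos r1 (proj1 Hr) Hr1R) as Hd1.
  set (f1 := f (phi r1)). set (g1 := g (phi r1)).
  set (Q := fun t => g1 * abspow (dphi t) q - (c - 1) * (dphi t / t)).
  (* At the inflection point only the curvature term of [Q] survives. *)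
  assert (HQ : is_derive Q r1 ((c - 1) * dphi r1 / r1 ^ 2)).
  { replace ((c - 1) * dphi r1 / r1 ^ 2) with
      (g1 * (q * Rpower (dphi r1) (q - 1) * ddphi r1) - (c - 1) * ((ddphi r1 - dphi r1 / r1) / r1))
      by (rewrite Hz; field; lra).
    apply (is_derive_minus (fun t => g1 * abspow (dphi t) q) (fun t => (c - 1) * (dphi t / t)));
      apply is_derive_scal; [apply is_derive_abspow|apply is_derive_ratio];
      solve [apply sol_derive2; lra || assumption | lra]. }
  assert (HQpos : 0 < (c - 1) * dphi r1 / r1 ^ 2).
  { apply Rdiv_lt_0_compat; [apply Rmult_lt_0_compat|apply pow_lt]; lra. }
  destruct (derive_pos_right Q r1 _ r0 HQ HQpos) as [y [Hy HQy]]; [lra|].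
  assert (HyR : Rbar_lt y Rm) by (apply (Rbar_lt_of_le y r0); [lra|exact Hr0R]).
  pose proof (ode_lower_bound r1 y ltac:(lra) HyR) as Hlow.
  pose proof (sol_ode r1 (proj1 Hr) Hr1R) as E1. unfold rhs in E1.
  pose proof (Hneg y ltac:(lra)).
  unfold Q, f1, g1 in *.
  replace ((c - 1) / y * dphi y) with ((c - 1) * (dphi y / y)) in Hlow by (field; lra).
  replace ((c - 1) / r1 * dphi r1) with ((c - 1) * (dphi r1 / r1)) in E1 by (field; lra).
  lra.
Qed.

Lemma not_concave_after_inflection_c1 (r1 r0 : R) :
  c = 1 -> 0 < r1 < r0 -> Rbar_lt r0 Rm -> ddphi r1 = 0 ->
  (forall x, r1 < x <= r0 -> ddphi x < 0) -> False.
Proof.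
  intros Hc1 Hr Hr0R Hz Hneg.
  assert (Hr1R : Rbar_lt r1 Rm) by (apply (Rbar_lt_of_le r1 r0); [lra|exact Hr0R]).
  set (f1 := f (phi r1)). set (g1 := g (phi r1)).
  pose proof (sol_ode r1 (proj1 Hr) Hr1R) as E1. unfold rhs in E1.
  rewrite Hz, Hc1, Rminus_eq_0, Rdiv_0_l, Rmult_0_l, Rplus_0_l in E1.
  (* [g] is negative at the inflection point, so the falling slope raises the right-hand side. *)
  assert (Hg1 : g1 < 0).
  { apply Rnot_le_lt. intros Hg. pose proof (Rmult_le_pos _ _ Hg (abspow_ge0 (dphi r1) q)).
    pose proof (f_pos (phi r1)). unfold g1 in *. lra. }
  destruct (dphi_mvt r1 r0 Hr Hr0R) as [xi [Hxi E]].
  assert (Hslope : dphi r0 <= dphi r1).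
  { pose proof (Hneg xi ltac:(lra)). assert (ddphi xi * (r0 - r1) < 0) by (apply Rmult_neg_pos; lra). lra. }
  assert (HA : abspow (dphi r0) q <= abspow (dphi r1) q)
    by (apply abspow_le; [lra|split; [apply deriv_pos; lra || exact Hr0R|exact Hslope]]).
  pose proof (ode_lower_bound r1 r0 ltac:(lra) Hr0R) as Hlow.
  rewrite Hc1, Rminus_eq_0, Rdiv_0_l, Rmult_0_l, Rminus_0_r in Hlow.
  pose proof (Hneg r0 ltac:(lra)).
  assert (g1 * abspow (dphi r1) q <= g1 * abspow (dphi r0) q) by (apply Rmult_le_compat_neg_l; lra).
  unfold f1, g1 in *. lra.
Qed.

Lemma second_deriv_nonneg (r : R) : 0 < r -> Rbar_lt r Rm -> 0 <= ddphi r.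
Proof.
  intros Hr HrR. apply Rnot_lt_le. intros Hneg.
  destruct (at_right_0_point _ r Hr derivs_pos_near0) as [a0 [Ha0 [_ Hdda0]]].
  destruct (last_crossing ddphi a0 r 0) as [r1 [Hr1 [Hz Hafter]]]; [lra| |lra|exact Hneg|].
  { intros x Hx. apply sol_continuous2; [lra|]. apply (Rbar_lt_of_le x r); [lra|exact HrR]. }
  destruct (Rle_lt_or_eq_dec 1 c c_ge1) as [Hc|Hc].
  - apply (not_concave_after_inflection_c_gt1 r1 r); auto; lra.
  - apply (not_concave_after_inflection_c1 r1 r); auto; lra.
Qed.

Lemma deriv_nondecreasing (u w : R) : 0 < u <= w -> Rbar_lt w Rm -> dphi u <= dphi w.
Proof.
  intros Huw HwR. destruct (Rle_lt_or_eq_dec u w (proj2 Huw)) as [Hlt|<-]; [|lra].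
  destruct (dphi_mvt u w ltac:(lra) HwR) as [xi [Hxi E]].
  assert (HxiR : Rbar_lt xi Rm) by (apply (Rbar_lt_of_le xi w); [lra|exact HwR]).
  pose proof (second_deriv_nonneg xi ltac:(lra) HxiR).
  assert (0 <= ddphi xi * (w - u)) by (apply Rmult_le_pos; lra). lra.
Qed.


Lemma phi_convex_ordered (x y t : R) : 0 <= x < y -> Rbar_lt y Rm -> 0 <= t <= 1 ->
  phi (t * x + (1 - t) * y) <= t * phi x + (1 - t) * phi y.
Proof.
  intros Hxy HyR Ht.
  destruct (Req_dec t 0) as [->|Ht0]; [replace (0 * x + (1 - 0) * y) with y by ring; lra|].
  destruct (Req_dec t 1) as [->|Ht1]; [replace (1 * x + (1 - 1) * y) with x by ring; lra|].
  set (z := t * x + (1 - t) * y).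
  assert (Hz : x < z < y) by (unfold z; split; nra).
  assert (HzR : Rbar_lt z Rm) by (apply (Rbar_lt_of_le z y); [lra|exact HyR]).
  destruct (phi_mvt x z) as [xi1 [Hxi1 E1]]; [lra|exact HzR|].
  destruct (phi_mvt z y) as [xi2 [Hxi2 E2]]; [lra|exact HyR|].
  assert (Hslopes : dphi xi1 <= dphi xi2)
    by (apply deriv_nondecreasing; [lra|apply (Rbar_lt_of_le xi2 y); [lra|exact HyR]]).
  assert (Ex : phi x = phi z - dphi xi1 * ((1 - t) * (y - x))) by (replace ((1 - t) * (y - x)) with (z - x) by (unfold z; ring); lra).
  assert (Ey : phi y = phi z + dphi xi2 * (t * (y - x))) by (replace (t * (y - x)) with (y - z) by (unfold z; ring); lra).
  assert (Hgap : t * phi x + (1 - t) * phi y - phi z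
                 = t * (1 - t) * (y - x) * (dphi xi2 - dphi xi1)) by (rewrite Ex, Ey; ring).
  assert (0 <= t * (1 - t) * (y - x) * (dphi xi2 - dphi xi1))
    by (repeat apply Rmult_le_pos; lra).
  lra.
Qed.

Lemma phi_convex (x y t : R) : 0 <= x -> Rbar_lt x Rm -> 0 <= y -> Rbar_lt y Rm ->
  0 <= t <= 1 -> phi (t * x + (1 - t) * y) <= t * phi x + (1 - t) * phi y.
Proof.
  intros Hx HxR Hy HyR Ht. destruct (Rtotal_order x y) as [Hlt|[<-|Hgt]].
  - apply phi_convex_ordered; [lra|exact HyR|exact Ht].
  - replace (t * x + (1 - t) * x) with x by ring. lra.
  - pose proof (phi_convex_ordered y x (1 - t) ltac:(lra) HxR ltac:(lra)) as H.
    replace ((1 - t) * y + (1 - (1 - t)) * x) with (t * x + (1 - t) * y) in H by ring. lra.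
Qed.

Lemma right_deriv_bound (r d : R) : 0 <= r -> Rbar_lt r Rm -> is_right_deriv phi r d ->
  0 < negpart (g (phi r)) -> d <= Rpower (f (phi r) / negpart (g (phi r))) (1 / q).
Proof.
  intros Hr HrR Hd Hn. destruct (Rle_lt_or_eq_dec 0 r Hr) as [Hpos|<-].
  2:{ destruct sol as (_ & _ & _ & _ & _ & Hd0 & _).
      rewrite (is_right_deriv_unique phi 0 d 0 Hd Hd0). left. apply Rpower_pos. }
  rewrite (is_right_deriv_unique phi r d (dphi r) Hd
             (is_derive_right_deriv _ _ _ (sol_derive r Hpos HrR))).
  pose proof (negpart_pos_eq _ Hn) as En. rewrite En in Hn |- *.
  pose proof (sol_ode r Hpos HrR) as E. unfold rhs in E.
  pose proof (deriv_pos r Hpos HrR) as Hd1. rewrite abspow_pos in E by exact Hd1.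
  pose proof (second_deriv_nonneg r Hpos HrR).
  assert (0 <= (c - 1) / r * dphi r) by (apply Rmult_le_pos; [apply Rdiv_le_0_compat|]; lra).
  assert (HA : Rpower (dphi r) q <= f (phi r) / - g (phi r)).
  { apply (Rmult_le_reg_r (- g (phi r))); [exact Hn|].
    unfold Rdiv. rewrite Rmult_assoc, Rinv_l by lra. nra. }
  replace (dphi r) with (Rpower (Rpower (dphi r) q) (1 / q))
    by (rewrite Rpower_mult; replace (q * (1 / q)) with 1 by (field; lra); apply Rpower_1, Hd1).
  apply Rle_Rpower_l; [left; apply Rdiv_lt_0_compat; lra|split; [apply Rpower_pos|exact HA]].
Qed.


Section NonnegativeG.

Hypothesis g_nonneg : forall x, 0 <= g x.

Lemma rhs_nondecreasing (x y : R) : 0 < x <= y -> Rbar_lt y Rm -> rhs x <= rhs y.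
Proof.
  intros Hxy HyR. unfold rhs.
  assert (HxR : Rbar_lt x Rm) by (apply (Rbar_lt_of_le x y); [lra|exact HyR]).
  assert (Hphi : phi x <= phi y).
  { destruct (Rle_lt_or_eq_dec x y (proj2 Hxy)) as [Hlt|<-]; [|lra].
    left. apply phi_increasing; [lra|exact Hlt|exact HyR]. }
  assert (HA : abspow (dphi x) q <= abspow (dphi y) q).
  { apply abspow_le; [lra|]. split; [apply deriv_pos; [lra|exact HxR]|].
    apply deriv_nondecreasing; [exact Hxy|exact HyR]. }
  pose proof (f_mono _ _ Hphi).
  assert (g (phi x) * abspow (dphi x) q <= g (phi y) * abspow (dphi y) q)
    by (apply Rmult_le_compat; [apply g_nonneg|apply abspow_ge0|apply g_mono, Hphi|exact HA]).
  lra.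
Qed.

Lemma initial_source_le_rhs (r : R) : 0 < r -> Rbar_lt r Rm -> f (phi 0) <= rhs r.
Proof.
  intros Hr HrR. unfold rhs.
  pose proof (f_mono _ _ (Rlt_le _ _ (phi_increasing 0 r (Rle_refl 0) Hr HrR))).
  pose proof (Rmult_le_pos _ _ (g_nonneg (phi r)) (abspow_ge0 (dphi r) q)).
  lra.
Qed.

Lemma second_deriv_ge_ratio (r0 : R) : 0 < r0 -> Rbar_lt r0 Rm -> dphi r0 / r0 <= ddphi r0.
Proof.
  intros Hr0 Hr0R. apply Rnot_lt_le. intros Hlt.
  set (v := fun t => dphi t / t).
  assert (Hdom : forall x, 0 < x <= r0 -> Rbar_lt x Rm)
    by (intros x Hx; apply (Rbar_lt_of_le x r0); [lra|exact Hr0R]).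
  assert (Hdv : forall x, 0 < x <= r0 -> is_derive v x ((ddphi x - v x) / x)).
  { intros x Hx. apply is_derive_ratio; [apply sol_derive2; [lra|apply Hdom, Hx]|lra]. }
  destruct second_deriv_lim0 as [L [_ [Hv HcL]]].
  set (m := rhs r0 / c).
  pose proof (sol_ode r0 Hr0 Hr0R) as E0.
  assert (Hmv : m < v r0).
  { unfold m, v. apply (Rmult_lt_reg_r c); [exact c_pos|].
    unfold Rdiv at 1. rewrite Rmult_assoc, Rinv_l, Rmult_1_r by lra.
    rewrite <- E0. replace ((c - 1) / r0 * dphi r0) with ((c - 1) * (dphi r0 / r0)) by (field; lra).
    nra. }
  assert (HLm : L <= m).
  { unfold m. apply (Rmult_le_reg_r c); [exact c_pos|].
    unfold Rdiv. rewrite Rmult_assoc, Rinv_l, Rmult_1_r, Rmult_comm, HcL by lra.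
    apply initial_source_le_rhs; assumption. }
  set (m' := (m + v r0) / 2).
  (* [v] starts near [L <= m < m'] and ends above [m'], but cannot increase while above [m]. *)
  destruct (at_right_0_point (fun t => v t < m') r0 Hr0) as [e [He Hve]].
  { apply (Hv (fun z => z < m')). apply open_lt. unfold m'. lra. }
  destruct (last_crossing (fun t => - v t) e r0 (- m')) as [r1 [Hr1 [Hz Hafter]]];
    [lra| |lra|unfold m'; lra|].
  { intros x Hx. apply (continuous_opp (K := R_AbsRing) (V := R_NormedModule)).
    exact (continuous_of_is_derive _ _ _ (Hdv x ltac:(lra))). }
  destruct (mvt_derive v (fun x => (ddphi x - v x) / x) r1 r0) as [xi [Hxi E]];
    [lra|intros x Hx; apply Hdv; lra|].
  assert (Hvxi : m' < v xi) by (pose proof (Hafter xi ltac:(lra)); lra).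
  assert (Hdrop : (ddphi xi - v xi) / xi < 0).
  { pose proof (sol_ode xi ltac:(lra) (Hdom xi ltac:(lra))) as Exi.
    pose proof (rhs_nondecreasing xi r0 ltac:(lra) Hr0R).
    replace ((c - 1) / xi * dphi xi) with ((c - 1) * v xi) in Exi by (unfold v; field; lra).
    assert (rhs r0 = c * m) by (unfold m; field; lra).
    assert (c * m < c * v xi) by (apply Rmult_lt_compat_l; unfold m' in Hvxi; lra).
    apply Rdiv_neg_pos; lra. }
  assert ((ddphi xi - v xi) / xi * (r0 - r1) < 0) by (apply Rmult_neg_pos; lra).
  pose proof (Hafter r0 ltac:(lra)). lra.
Qed.

End NonnegativeG.

End MonotoneSource.

End PositiveSource.

End Solution.

Theorem lemma2p1 (c q : R) (f g : R -> R) (a : R) (Rm : Rbar) (phi : R -> R) :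
  0 < c -> 0 < q ->
  (forall x, continuous f x) -> (forall x, continuous g x) ->
  is_solution c q f g a Rm phi ->
  (* (i) *)
  ((forall x, 0 < f x) ->
     forall r s, 0 <= r -> r < s -> Rbar_lt s Rm -> phi r < phi s) /\
  (* (ii) *)
  ((forall x, 0 < f x) ->
   (forall x y, x <= y -> f x <= f y) ->
   (forall x y, x <= y -> g x <= g y) ->
   1 <= c ->
     (forall x y t, 0 <= x -> Rbar_lt x Rm -> 0 <= y -> Rbar_lt y Rm ->
        0 <= t <= 1 ->
        phi (t * x + (1 - t) * y) <= t * phi x + (1 - t) * phi y) /\
     (forall r d, 0 <= r -> Rbar_lt r Rm -> is_right_deriv phi r d ->
        0 < negpart (g (phi r)) ->
        d <= Rpower (f (phi r) / negpart (g (phi r))) (1 / q))) /\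
  (* (iii) *)
  ((forall x, 0 < f x) ->
   (forall x y, x <= y -> f x <= f y) ->
   (forall x y, x <= y -> g x <= g y) ->
   (forall x, 0 <= g x) ->
   1 <= c ->
     forall r, 0 < r -> Rbar_lt r Rm -> Derive phi r / r <= Derive_n phi 2 r).
Proof.
  intros Hc Hq Hf Hg Hsol. split; [|split].
  - exact (phi_increasing c q f g a Rm phi Hc Hq Hf Hg Hsol).
  - intros Hfpos Hfmono Hgmono Hc1. split.
    + exact (phi_convex c q f g a Rm phi Hc Hq Hf Hg Hsol Hfpos Hfmono Hgmono Hc1).
    + exact (right_deriv_bound c q f g a Rm phi Hc Hq Hf Hg Hsol Hfpos Hfmono Hgmono Hc1).
  - intros Hfpos Hfmono Hgmono Hgnonneg Hc1.
    exact (second_deriv_ge_ratio c q f g a Rm phi Hc Hq Hf Hg Hsol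
             Hfpos Hfmono Hgmono Hc1 Hgnonneg).
Qed.
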